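(* Let $A$ be an algorithm of type GroupLIS$(\beta)$, $\beta\in\mathbb{N}$, run with some speedup $s$, and let $I$ be a time interval during which the list $L$ of pending tasks of some cost $c$ contains at least $\beta n^2$ tasks at all times. Then for any two distinct absolute task executions fully contained in $I$, of tasks $\tau_1,\tau_2\in L$ by processors $p_1$ and $p_2$ respectively, we have $\tau_1\ne\tau_2$.
   Context: Model: $n$ processors with ids $1,\dots,n$ and a shared repository; tasks with ids, arrival times and costs are injected over time, processors may crash and restart. A task is pending if injected and its completion not yet reported; once reported it is immediately removed from the pending set. A processor repeatedly obtains the pending set, chooses a task, executes it (a task of cost $\ell$ takes time $\ell/s$ under speedup $s$) and reports it; execution is non-preemptive and a crash loses progress. An absolute task execution of task $\tau$ is an interval $[t,t']$ such that a processor schedules $\tau$ at time $t$ and reports its completion at $t'$ without stopping its execution within $[t,t')$. An algorithm is of type GroupLIS$(\beta)$ if it partitions pending tasks into classes of equal cost, sorts each class in increasing order of arrival time, and whenever a class contains at least $\beta n^2$ pending tasks and a processor $p$ schedules a task from that class, it schedules the $(p\cdot\beta n)$-th task of the class. *)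

From mathcomp Require Import all_boot.
From Stdlib Require Import Reals.

Set Implicit Arguments.
Unset Strict Implicit.
Unset Printing Implicit Defensive.

(* An execution attempt: processor [a_proc] schedules task [a_task] at time
   [a_start] and executes it without interruption until [a_end]; either it
   completes and reports at [a_end] ([a_done = true]), or the processor
   crashes at [a_end] and all progress is lost ([a_done = false]).           *)
Record attempt := Attempt {
  a_proc : nat;
  a_task : nat;
  a_start : R;
  a_end : R;
  a_done : bool }.

Record system := System {
  istask : nat -> Prop;
  arr : nat -> R;
  cost : nat -> R;
  att : attempt -> Prop }.

Definition reported_by (S : system) (x : nat) (t : R) : Prop :=
  exists a, att S a /\ a_done a = true /\ a_task a = x /\ (a_end a <= t)%R.

Definition pending (S : system) (x : nat) (t : R) : Prop :=
  istask S x /\ (arr S x <= t)%R /\ ~ reported_by S x t.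

Record valid_run (n : nat) (s : R) (S : system) : Prop := {
  vr_cost_pos : forall x, istask S x -> (0 < cost S x)%R;
  vr_proc : forall a, att S a -> (1 <= a_proc a <= n)%N;
  vr_pending : forall a, att S a -> pending S (a_task a) (a_start a);
  vr_done : forall a, att S a -> a_done a = true ->
      a_end a = (a_start a + cost S (a_task a) / s)%R;
  vr_crash : forall a, att S a -> a_done a = false ->
      (a_start a <= a_end a < a_start a + cost S (a_task a) / s)%R;
  vr_seq : forall a b, att S a -> att S b -> a <> b -> a_proc a = a_proc b ->
      (a_end a <= a_start b \/ a_end b <= a_start a)%R }.

Definition abs_exec (S : system) (a : attempt) : Prop :=
  att S a /\ a_done a = true.

Definition in_class (S : system) (c : R) (t : R) (x : nat) : Prop :=
  pending S x t /\ cost S x = c.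

Definition class_at_least (S : system) (c t : R) (k : nat) : Prop :=
  exists l : seq nat, uniq l /\ (k <= size l)%N /\
    forall x, x \in l -> in_class S c t x.

(* [ord] is the order "increasing arrival time" used for sorting (a strict
   total order on task ids refining the arrival times; ties broken in some
   fixed way). *)
Definition arrival_order (S : system) (ord : nat -> nat -> Prop) : Prop :=
  (forall x, ~ ord x x) /\
  (forall x y z, ord x y -> ord y z -> ord x z) /\
  (forall x y, x <> y -> ord x y \/ ord y x) /\
  (forall x y, (arr S x < arr S y)%R -> ord x y).

(* x is the k-th task (1-indexed) of the class of cost c, sorted by ord, at
   time t: x is in the class and exactly k-1 tasks of the class precede it. *)
Definition kth_in_class (S : system) (ord : nat -> nat -> Prop)
    (c t : R) (k : nat) (x : nat) : Prop :=
  in_class S c t x /\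
  exists l : seq nat, uniq l /\ size l = k.-1 /\
    forall y, y \in l <-> (in_class S c t y /\ ord y x).

Definition GroupLIS (n beta : nat) (S : system) (ord : nat -> nat -> Prop) : Prop :=
  arrival_order S ord /\
  forall a, att S a ->
    class_at_least S (cost S (a_task a)) (a_start a) (beta * expn n 2) ->
    kth_in_class S ord (cost S (a_task a)) (a_start a)
      (a_proc a * (beta * n)) (a_task a).

Definition is_interval (I : R -> Prop) : Prop :=
  forall x y z, I x -> I z -> (x <= y <= z)%R -> I y.

(* Suppose two absolute executions of the same task x of cost c overlap, the
   first starting at t1 and the second, by another processor, at t2 in
   [t1, t1 + c/s).  The tasks preceding x in its class at t2 also preceded it
   at t1; each task that preceded x at t1 but not at t2 was reported in
   (t1, t2].  Those reports come from pairwise distinct processors (two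
   executions of cost c by one processor end at least c/s apart), none of
   them the processor running x since t1.  So the rank of x drops by at most
   n - 1 between t1 and t2, while GroupLIS places the two processors' ranks a
   multiple of beta n >= n apart: the processors coincide.  Executions of x
   that do not overlap are impossible as x is no longer pending after its
   first report. *)
From mathcomp Require Import all_boot zify.
From Stdlib Require Import Reals Lra Classical.

Set Implicit Arguments.
Unset Strict Implicit.
Unset Printing Implicit Defensive.

Lemma uniq_leq_size_rel (T U : eqType) (Rel : T -> U -> Prop)
    (D : seq T) (P : seq U) :
  uniq D -> uniq P ->
  (forall y, y \in D -> exists2 p, p \in P & Rel y p) ->
  (forall y z p, y \in D -> z \in D -> Rel y p -> Rel z p -> y = z) ->
  (size D <= size P)%N.
Proof.
elim: D P => [//|y D IH] P /= /andP[yD uD] uP wit inj.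
have [p pP Ryp] := wit y (mem_head _ _).
have szDP : (size D <= size (rem p P))%N.
  apply: IH; rewrite ?rem_uniq //.
  - move=> z zD; have [q qP Rzq] : exists2 q, q \in P & Rel z q by apply: wit; rewrite inE zD orbT.
    exists q => //; rewrite mem_rem_uniq // inE qP andbT.
    apply: contraNneq yD => eq_qp.
    by rewrite (inj y z p) ?mem_head ?inE ?zD ?orbT // -eq_qp.
  - by move=> u v q uD' vD'; apply: inj; rewrite inE ?uD' ?vD' orbT.
have P_gt0 : (0 < size P)%N by case: (P) pP.
by rewrite size_rem // in szDP; lia.
Qed.

Lemma size_leq_filter_notin (T : eqType) (l1 l2 : seq T) :
  uniq l1 -> (size l1 <= size l2 + size [seq y <- l1 | y \notin l2])%N.
Proof.
move=> u1; rewrite -(count_predC (mem l2) l1) -!size_filter leq_add2r.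
by apply: uniq_leq_size; rewrite ?filter_uniq // => y; rewrite mem_filter => /andP[].
Qed.

Lemma rank_gap_eq (m n p1 p2 : nat) : (0 < n)%N -> (n <= m)%N -> (0 < p1)%N -> (0 < p2)%N ->
  ((p2 * m).-1 <= (p1 * m).-1 <= n.-1 + (p2 * m).-1)%N -> p1 = p2.
Proof.
move=> n_gt0 le_nm p1_gt0 p2_gt0 /andP[lo hi].
have m_gt0 : (0 < m)%N by lia.
have p1m_gt0 : (0 < p1 * m)%N by rewrite muln_gt0 p1_gt0.
have p2m_gt0 : (0 < p2 * m)%N by rewrite muln_gt0 p2_gt0.
have le21 : (p2 <= p1)%N by rewrite -(leq_pmul2r m_gt0); lia.
have lt12 : (p1 < p2.+1)%N by rewrite -(ltn_pmul2r m_gt0) mulSn; lia.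
lia.
Qed.

Lemma reported_by_mono S x t1 t2 :
  (t1 <= t2)%R -> reported_by S x t1 -> reported_by S x t2.
Proof. by move=> le12 [a [? [? [? ?]]]]; exists a; do 3 split=> //; lra. Qed.

Lemma arrival_order_arr_le S ord x y :
  arrival_order S ord -> ord y x -> (arr S y <= arr S x)%R.
Proof.
move=> [irr [trans [_ arr_ord]]] oyx; apply: Rnot_lt_le => /arr_ord oxy.
exact: irr (trans _ _ _ oyx oxy).
Qed.

Section ValidRun.

Variables (n : nat) (s : R) (S : system).
Hypothesis s_gt0 : (0 < s)%R.
Hypothesis valid : valid_run n s S.

Lemma abs_exec_start_le_end a : abs_exec S a -> (a_start a <= a_end a)%R.
Proof.
move=> [att_a done_a]; rewrite (vr_done valid att_a done_a).
have [task_a _] := vr_pending valid att_a.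
have := vr_cost_pos valid task_a.
have := Rdiv_lt_0_compat (cost S (a_task a)) s; lra.
Qed.

Lemma abs_exec_end_gt_start a b :
  abs_exec S a -> att S b -> a_task a = a_task b -> (a_start b < a_end a)%R.
Proof.
move=> [att_a done_a] att_b task_ab; apply: Rnot_le_lt => le_ab.
have [_ [_ not_reported]] := vr_pending valid att_b.
by apply: not_reported; exists a.
Qed.

Lemma same_proc_ends_apart c b1 b2 :
  abs_exec S b1 -> abs_exec S b2 -> b1 <> b2 -> a_proc b1 = a_proc b2 ->
  cost S (a_task b1) = c -> cost S (a_task b2) = c ->
  (a_end b1 + c / s <= a_end b2 \/ a_end b2 + c / s <= a_end b1)%R.
Proof.
move=> [att1 done1] [att2 done2] ne12 proc12 cost1 cost2.
have := vr_done valid att1 done1; have := vr_done valid att2 done2.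
rewrite cost1 cost2; case: (vr_seq valid att1 att2 ne12 proc12); lra.
Qed.

Lemma reported_between x t1 t2 :
  pending S x t1 -> reported_by S x t2 ->
  exists b, abs_exec S b /\ a_task b = x /\ (t1 < a_end b <= t2)%R.
Proof.
move=> [_ [_ not_reported]] [b [att_b [done_b [task_b le_b]]]].
exists b; do 2 split=> //; split=> //; apply: Rnot_le_lt => le_b1.
by apply: not_reported; exists b.
Qed.

Lemma in_class_earlier ord c t1 t2 x y :
  arrival_order S ord -> (t1 <= t2)%R -> pending S x t1 ->
  in_class S c t2 y -> ord y x -> in_class S c t1 y.
Proof.
move=> arr_ord le12 [_ [arr_x _]] [[task_y [_ not_reported]] cost_y] oyx.
have := arrival_order_arr_le arr_ord oyx.
split=> //; split=> //; split; first lra.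
by move/(reported_by_mono le12).
Qed.

Lemma size_reported_during_abs_exec a t D :
  abs_exec S a -> (a_start a <= t < a_end a)%R -> uniq D ->
  (forall y, y \in D -> [/\ cost S y = cost S (a_task a), y <> a_task a,
                            pending S y (a_start a) & reported_by S y t]) ->
  (size D <= n.-1)%N.
Proof.
move=> ex_a [le_t lt_t] uniq_D D_reported.
have [att_a done_a] := ex_a.
have end_a := vr_done valid att_a done_a.
pose reported_by_proc y p := exists b, abs_exec S b /\ a_task b = y /\
  (a_start a < a_end b <= t)%R /\ a_proc b = p.
have -> : n.-1 = size (rem (a_proc a) (iota 1 n)).
  by rewrite size_rem ?size_iota // mem_iota; have := vr_proc valid att_a; lia.
apply: (uniq_leq_size_rel (Rel := reported_by_proc)); rewrite ?rem_uniq ?iota_uniq //.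
- move=> y /D_reported [_ ne_ya pend_y reported_y].
  have [b [ex_b [task_b end_b]]] := reported_between pend_y reported_y.
  exists (a_proc b); last by exists b.
  have [att_b _] := ex_b.
  rewrite mem_rem_uniq ?iota_uniq // inE mem_iota.
  have /andP[? ?] := vr_proc valid att_b; apply/andP; split; last lia.
  apply/eqP => proc_ba.
  have ne_ba : b <> a by move=> eq_ba; apply: ne_ya; rewrite -task_b eq_ba.
  have := abs_exec_start_le_end ex_b.
  case: (vr_seq valid att_b att_a ne_ba proc_ba); lra.
- move=> y z p /D_reported [cost_y _ _ _] /D_reported [cost_z _ _ _].
  move=> [by_ [ex_y [task_y [end_y proc_y]]]] [bz [ex_z [task_z [end_z proc_z]]]].
  apply: NNPP => ne_yz.
  have ne_b : by_ <> bz by move=> eq_b; apply: ne_yz; rewrite -task_y -task_z eq_b.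
  have := same_proc_ends_apart ex_y ex_z ne_b (etrans proc_y (esym proc_z)).
  rewrite task_y task_z cost_y cost_z => /(_ _ erefl erefl); lra.
Qed.

Section GroupLIS.

Variables (beta : nat) (ord : nat -> nat -> Prop).
Hypothesis beta_gt0 : (0 < beta)%N.
Hypothesis alg : GroupLIS n beta S ord.

Lemma overlapping_abs_execs_same_proc a1 a2 :
  abs_exec S a1 -> abs_exec S a2 -> a_task a1 = a_task a2 ->
  (a_start a1 <= a_start a2 < a_end a1)%R ->
  class_at_least S (cost S (a_task a1)) (a_start a1) (beta * expn n 2) ->
  class_at_least S (cost S (a_task a1)) (a_start a2) (beta * expn n 2) ->
  a_proc a1 = a_proc a2.
Proof.
move=> ex1 ex2 task12 [le12 lt2e] big1 big2.
have [arr_ord rank] := alg; have [ord_irr _] := arr_ord.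
have [att1 _] := ex1; have [att2 _] := ex2.
have [[pend1 _] [l1 [uniq1 [size1 mem1]]]] := rank a1 att1 big1.
have [_ [l2 [uniq2 [size2 mem2]]]] := rank a2 att2 (ltac:(by rewrite -task12)).
rewrite -task12 in mem2.
have sub21 : {subset l2 <= l1}.
  move=> y /mem2 [cl2 oyx]; apply/mem1; split=> //.
  exact: in_class_earlier arr_ord le12 pend1 cl2 oyx.
have size_left : (size [seq y <- l1 | y \notin l2] <= n.-1)%N.
  apply: (size_reported_during_abs_exec ex1 (conj le12 lt2e)); first exact: filter_uniq.
  move=> y; rewrite mem_filter => /andP[y_l2 /mem1 [[pend_y cost_y] oyx]].
  split=> //; first by move=> eq_yx; apply: (ord_irr y); rewrite {2}eq_yx.
  apply: NNPP => not_reported; move/negP: y_l2; apply; apply/mem2.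
  have [task_y [arr_y _]] := pend_y.
  by do 3!split=> //; split=> //; lra.
have n_gt0 : (0 < n)%N by have := vr_proc valid att1; lia.
have := size_leq_filter_notin l2 uniq1; have := uniq_leq_size uniq2 sub21.
rewrite size1 size2 => lo hi; apply: (rank_gap_eq (m := beta * n) n_gt0).
- by rewrite leq_pmull.
- by have := vr_proc valid att1; lia.
- by have := vr_proc valid att2; lia.
- by rewrite lo /=; lia.
Qed.

End GroupLIS.
End ValidRun.

Theorem lemma9 (n beta : nat) (s : R) (S : system) (ord : nat -> nat -> Prop)
    (I : R -> Prop) (c : R) :
  (0 < beta)%N -> (0 < s)%R ->
  valid_run n s S -> GroupLIS n beta S ord ->
  is_interval I ->
  (forall t, I t -> class_at_least S c t (beta * expn n 2)) ->
  forall a1 a2 : attempt,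
    abs_exec S a1 -> abs_exec S a2 -> a1 <> a2 ->
    (forall u, (a_start a1 <= u <= a_end a1)%R -> I u) ->
    (forall u, (a_start a2 <= u <= a_end a2)%R -> I u) ->
    cost S (a_task a1) = c -> cost S (a_task a2) = c ->
    a_task a1 <> a_task a2.
Proof.
move=> beta_gt0 s_gt0 valid alg _ big a1 a2 ex1 ex2 ne12 I1 I2 cost1 cost2 task12.
have big1 := big _ (I1 _ (conj (Rle_refl _) (abs_exec_start_le_end s_gt0 valid ex1))).
have big2 := big _ (I2 _ (conj (Rle_refl _) (abs_exec_start_le_end s_gt0 valid ex2))).
have start2_lt_end1 := abs_exec_end_gt_start valid ex1 ex2.1 task12.
have start1_lt_end2 := abs_exec_end_gt_start valid ex2 ex1.1 (esym task12).
have same_proc : a_proc a1 = a_proc a2.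
  case: (Rle_or_lt (a_start a1) (a_start a2)) => [le_starts | lt_starts].
    apply: (overlapping_abs_execs_same_proc s_gt0 valid beta_gt0 alg) => //;
      by rewrite cost1.
  apply/esym/(overlapping_abs_execs_same_proc s_gt0 valid beta_gt0 alg) => //;
    first (split; lra); by rewrite cost2.
by case: (vr_seq valid ex1.1 ex2.1 ne12 same_proc); lra.
Qed.
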